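(* Let $0<\epsilon\le 1/2$. Then $r_{\mathrm{bif}}(-\epsilon)\le 1/4+\epsilon-\epsilon^2$.
   Context: $f_c(z)=z^2+c$, extended to $\widehat{\mathbb{C}}$ by $f_c(\infty)=\infty$. For $c\in\mathbb{C}$, $r\ge0$, $G_{c,r}$ is the semigroup under composition generated by $\{f_{c'}:|c'-c|\le r\}$. A minimal set of a polynomial semigroup $G$ is a minimal element, with respect to inclusion, of the family of non-empty compact $L\subset\widehat{\mathbb{C}}$ with $g(L)\subset L$ for all $g\in G$; it is planar if $\infty\notin L$. The bifurcation radius $r_{\mathrm{bif}}(c)$ is the supremum of those $r\ge0$ for which $G_{c,r}$ has a planar minimal set (equivalently the infimum of those $r\ge0$ for which $G_{c,r}$ has no planar minimal set); by prior work this value is attained and $G_{c,r}$ has a planar minimal set iff $r\le r_{\mathrm{bif}}(c)$. *)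

(* The complex plane is mathcomp-real-closed's
   [complex R] (= R[i]) for R : realType, with its numField norm topology;
   the Riemann sphere is mathcomp-analysis' one-point compactification,
   [None] playing the role of infinity. *)
From HB Require Import structures.
From mathcomp Require Import all_boot all_order all_algebra.
From mathcomp Require Import all_classical all_reals all_analysis.
From mathcomp Require Import complex.
Set Implicit Arguments. Unset Strict Implicit. Unset Printing Implicit Defensive.
Import Order.TTheory GRing.Theory Num.Theory.
Import numFieldNormedType.Exports.
Local Open Scope classical_set_scope.
Local Open Scope ring_scope.
Local Open Scope complex_scope.

Notation Chat R := (one_point_compactification (GRing.regular (complex R))).

Definition fquad (R : realType) (c : R[i]) (z : Chat R) : Chat R :=
  match z with
  | Some w => Some (w ^+ 2 + c)
  | None => None
  end.

Inductive gen_semigroup (T : Type) (gens : set (T -> T)) : (T -> T) -> Prop :=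
  | gs_gen g : gens g -> gen_semigroup gens g
  | gs_comp g h : gen_semigroup gens g -> gen_semigroup gens h ->
                  gen_semigroup gens (g \o h).

Definition Gcr (R : realType) (c : R[i]) (r : R) : (Chat R -> Chat R) -> Prop :=
  gen_semigroup [set fquad c' | c' in [set c' : R[i] | `|c' - c| <= r%:C]].

Definition G_invariant (T : Type) (G : (T -> T) -> Prop) (L : set T) : Prop :=
  forall g, G g -> g @` L `<=` L.

Definition inv_compact (R : realType) (G : (Chat R -> Chat R) -> Prop)
  (L : set (Chat R)) : Prop :=
  L !=set0 /\ compact L /\ G_invariant G L.

Definition minimal_set (R : realType) (G : (Chat R -> Chat R) -> Prop)
  (L : set (Chat R)) : Prop :=
  inv_compact G L /\ (forall K, inv_compact G K -> K `<=` L -> K = L).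

Definition planar (R : realType) (L : set (Chat R)) : Prop := ~ L None.

Definition has_planar_minimal_set (R : realType) (c : R[i]) (r : R) : Prop :=
  exists L, minimal_set (Gcr c r) L /\ planar L.

Definition r_bif (R : realType) (c : R[i]) : \bar R :=
  ereal_sup [set r%:E | r in [set r : R | 0 <= r /\ has_planar_minimal_set c r]].

(* Let r > 1/4 + eps - eps^2 and let L be a non-empty compact invariant set of
   G_{-eps,r} avoiding oo, hence bounded.  For z in L, the admissible parameter
   c = -eps + r (z^2 - eps) / |z^2 - eps| puts a point of modulus
   |z^2 - eps| + r into L.  If some z in L has |z^2 - eps| > r, this yields
   points of modulus t >= 2r, and iterating replaces t by at least
   t^2 - eps + r >= t + (4r^2 - r - eps).  Otherwise c = -z^2 is admissible
   and 0 lies in L; for a primitive cube root of unity zeta the parameters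
   r zeta and r zeta^2 are admissible since eps <= r, and they send t zeta^2 to
   (t^2 + r) zeta and t zeta to (t^2 + r) zeta^2, where t^2 + r >= t + (r - 1/4).
   As 4r^2 - r - eps > 0 and r > 1/4, L is unbounded in both cases. *)

From HB Require Import structures.
From mathcomp Require Import all_boot all_order all_algebra.
From mathcomp Require Import all_classical all_reals all_analysis.
From mathcomp Require Import complex.
From mathcomp Require Import ring lra.
Import Order.TTheory GRing.Theory Num.Theory.
Import numFieldNormedType.Exports.
Local Open Scope classical_set_scope.
Local Open Scope ring_scope.

Lemma drift_unbounded {R : archiRealFieldType} {P : R -> Prop} {d t : R} :
  0 < d -> (forall s, P s -> exists2 s', P s' & s + d <= s') -> P t ->
  forall M, exists2 s, P s & M <= s.
Proof.
move=> d_gt0 drift Pt M.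
have iter_drift k : exists2 s, P s & t + k%:R * d <= s.
  elim: k => [|k [s Ps tks]]; first by exists t; rewrite ?mul0r ?addr0.
  have [s' Ps' ss'] := drift s Ps; exists s' => //.
  by rewrite mulrSr mulrDl mul1r addrA (le_trans _ ss') ?lerD2r.
have [s Ps ts] := iter_drift (Num.truncn ((M - t) / d)).+1.
exists s => //; apply: le_trans ts; rewrite -lerBlDl -ler_pdivrMr //.
exact/ltW/truncnS_gt.
Qed.

Lemma exists_norm_shift {K : numFieldType} (w s : K) :
  0 <= s -> exists2 c, `|c| <= s & `|w + c| = `|w| + s.
Proof.
move=> s_ge0; have [->|w_neq0] := eqVneq w 0.
  by exists s; rewrite ?add0r ?normr0 ?add0r ?ger0_norm.
have nw_neq0 : `|w| != 0 by rewrite normr_eq0.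
have ratio_ge0 : 0 <= s / `|w| by rewrite divr_ge0.
exists (w * (s / `|w|)); first by rewrite normrM (ger0_norm ratio_ge0) mulrC divfK.
rewrite -{1}[w]mulr1 -mulrDr normrM (@ger0_norm _ (1 + _)) ?addr_ge0 //.
by rewrite mulrDr mulr1 mulrC divfK.
Qed.

Lemma one_point_compact_bounded {K : numDomainType}
    {V : pseudoMetricNormedZmodType K} {L : set (one_point_compactification V)} :
  compact L -> ~ L None -> exists B : K, forall x, L (Some x) -> `|x| < B.
Proof.
rewrite compact_cover => Lc LN.
pose U (z : V) : set (one_point_compactification V) :=
  Some @` ball (0 : V) (`|z| + 1).
have U_open z : [set: V] z -> open (U z).
  by move=> _; apply: one_point_compactification_open_some; exact: ball_open.
have L_cover : L `<=` cover [set: V] U.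
  case=> [z|] Lz //; exists z => //; exists z => //.
  by rewrite -ball_normE /= sub0r normrN ltrDl.
have [D _ LD] := Lc V [set: V] U U_open L_cover.
exists (\sum_(z <- finmap.enum_fset D) (`|z| + 1)) => x Lx.
have [z Dz [y + [yx]]] := LD _ Lx; rewrite -{}yx -ball_normE /= sub0r normrN.
move=> /lt_le_trans; apply.
rewrite (bigD1_seq z) //= ?finmap.fset_uniq // lerDl.
by apply: sumr_ge0 => w _; rewrite addr_ge0.
Qed.

Lemma exists_cube_root_unity (C : numClosedFieldType) :
  exists zeta : C, zeta ^+ 2 + zeta + 1 = 0.
Proof.
exists ((sqrtC (-3) - 1) / 2).
rewrite (_ : _ + _ + 1 = (sqrtC (-3) ^+ 2 + 3) / 4); last by field.
by rewrite sqrtCK addNr mul0r.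
Qed.

Section CubeRootUnity.
Context {C : numClosedFieldType} {zeta : C}.
Hypothesis zeta_root : zeta ^+ 2 + zeta + 1 = 0.

Lemma cube_root_expr3 : zeta ^+ 3 = 1.
Proof.
apply/eqP; rewrite -subr_eq0.
have -> : zeta ^+ 3 - 1 = (zeta - 1) * (zeta ^+ 2 + zeta + 1) by ring.
by rewrite zeta_root mulr0.
Qed.

Lemma cube_root_sqrK : (zeta ^+ 2) ^+ 2 = zeta.
Proof. by rewrite -exprM (exprS _ 3) cube_root_expr3 mulr1. Qed.

Lemma cube_root_sqr_root : (zeta ^+ 2) ^+ 2 + zeta ^+ 2 + 1 = 0.
Proof. by rewrite cube_root_sqrK [zeta + _]addrC. Qed.

Lemma norm_cube_root : `|zeta| = 1.
Proof.
apply/eqP; rewrite -(pexpr_eq1 (_ : 0 < 3)%N) // -normrX cube_root_expr3.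
by rewrite normr1.
Qed.

Lemma conj_cube_root : zeta^* = zeta ^+ 2.
Proof.
have zeta_neq0 : zeta != 0 by rewrite -normr_eq0 norm_cube_root oner_eq0.
have := invC_norm zeta; rewrite norm_cube_root expr1n invr1 mul1r => <-.
by rewrite -[zeta^-1]mulr1 -cube_root_expr3 exprS mulKf.
Qed.

Lemma norm_scale_cube_root_addr (r e : C) :
  0 <= e <= r -> `|r * zeta + e| <= r.
Proof.
case/andP=> e_ge0 e_le_r; have r_ge0 := le_trans e_ge0 e_le_r.
rewrite -(ler_pXn2r (_ : 0 < 2)%N) ?nnegrE // normCK rmorphD rmorphM.
rewrite /= (geC0_conj r_ge0) (geC0_conj e_ge0) conj_cube_root.
have -> : (r * zeta + e) * (r * zeta ^+ 2 + e) =
    r ^+ 2 * zeta ^+ 3 + r * e * (zeta ^+ 2 + zeta + 1) - e * (r - e) by ring.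
by rewrite cube_root_expr3 zeta_root mulr0 addr0 mulr1 gerBl mulr_ge0 ?subr_ge0.
Qed.

End CubeRootUnity.

Local Open Scope complex_scope.

Lemma Gcr_invariant_step (R : realType) (c c' z : R[i]) (r : R)
    (L : set (Chat R)) :
  G_invariant (Gcr c r) L -> `|c' - c| <= r%:C -> L (Some z) ->
  L (Some (z ^+ 2 + c')).
Proof.
move=> L_inv c'_near Lz.
by apply: (L_inv (fquad c')); [apply: gs_gen; exists c' | exists (Some z)].
Qed.

Section Escape.
Context {R : realType} {eps r : R} {B : R[i]} {L : set (Chat R)}.
Hypotheses (eps_ge0 : 0 <= eps) (r_ge0 : 0 <= r).
Hypothesis L_step : forall c z : R[i],
  `|c + eps%:C| <= r%:C -> L (Some z) -> L (Some (z ^+ 2 + c)).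
Hypothesis L_bounded : forall z, L (Some z) -> `|z| < B.

Let lt_Re_bound {t : R} {z : R[i]} :
  L (Some z) -> t%:C <= `|z| -> t < complex.Re B.
Proof.
move=> Lz tz; have /(le_lt_trans tz) := L_bounded _ Lz.
by rewrite ltcE => /andP[].
Qed.

Lemma step_to_max_modulus z : L (Some z) ->
  exists2 z', L (Some z') & `|z'| = `|z ^+ 2 - eps%:C| + r%:C.
Proof.
move=> Lz; have /(exists_norm_shift (z ^+ 2 - eps%:C)) [c c_le shift] : 0 <= r%:C.
  by rewrite ler0c.
exists (z ^+ 2 - eps%:C + c) => //.
by rewrite -addrA [- _ + _]addrC; apply: L_step; rewrite ?subrK.
Qed.

Lemma no_point_beyond_twice_r : 0 < 4 * r ^+ 2 - r - eps ->
  forall z, L (Some z) -> ~ (2 * r)%:C <= `|z|.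
Proof.
move=> d_gt0 z Lz z_ge; have r_gt : 1 / 4 < r by move: r_ge0 eps_ge0; nra.
set d := 4 * r ^+ 2 - r - eps in d_gt0.
pose P t := 2 * r <= t /\ exists2 w, L (Some w) & t%:C <= `|w|.
have drift t : P t -> exists2 s, P s & t + d <= s.
  case=> t_ge [w Lw tw]; have [w' Lw' nw'] := step_to_max_modulus w Lw.
  have growth : t + d <= t ^+ 2 - eps + r.
    have : 0 <= (t - 2 * r) * (t + 2 * r - 1) by apply: mulr_ge0; lra.
    rewrite /d; nra.
  exists (t + d) => //; split; first lra.
  exists w' => //; apply: le_trans (_ : (t ^+ 2 - eps + r)%:C <= _).
    by rewrite lecR.
  rewrite nw' !rmorphD rmorphN rmorphXn lerD2r.
  apply: le_trans (lerB_dist _ _).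
  rewrite normrX (ger0_norm (_ : 0 <= eps%:C)) ?ler0c // lerD2r.
  by apply: lerXn2r tw; rewrite nnegrE ?normr_ge0 // ler0c; lra.
have P2r : P (2 * r) by split; last exists z.
have [s [_ [w Lw sw]]] := drift_unbounded d_gt0 drift P2r (complex.Re B).
by rewrite leNgt (lt_Re_bound Lw sw).
Qed.

Lemma origin_notin : 1 / 4 < r -> eps <= r -> ~ L (Some 0).
Proof.
move=> r_gt eps_le_r L0; have [zeta zeta_root] := exists_cube_root_unity R[i].
have cube_step t (xi : R[i]) : xi ^+ 2 + xi + 1 = 0 ->
    L (Some (t%:C * xi)) -> L (Some ((t ^+ 2 + r)%:C * xi ^+ 2)).
  move=> xi_root Lt.
  rewrite rmorphD rmorphXn mulrDl -exprMn; apply: L_step Lt.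
  apply: norm_scale_cube_root_addr; first exact: cube_root_sqr_root xi_root.
  by rewrite !lecR eps_ge0 eps_le_r.
pose P t := 0 <= t /\ L (Some (t%:C * zeta)) /\ L (Some (t%:C * zeta ^+ 2)).
have drift t : P t -> exists2 s, P s & t + (r - 1 / 4) <= s.
  case=> t_ge0 [Lz Lz2]; exists (t ^+ 2 + r); last first.
    by have := sqr_ge0 (t - 1 / 2); nra.
  split; first by have := sqr_ge0 t; lra.
  split; last exact: cube_step t zeta zeta_root Lz.
  rewrite -(cube_root_sqrK zeta_root).
  exact: cube_step t (zeta ^+ 2) (cube_root_sqr_root zeta_root) Lz2.
have P0 : P 0 by split; rewrite ?rmorph0 ?mul0r.
have d_gt0 : 0 < r - 1 / 4 by lra.
have [s [s_ge0 [Ls _]] sB] := drift_unbounded d_gt0 drift P0 (complex.Re B).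
have : s%:C <= `|s%:C * zeta|.
  by rewrite normrM (norm_cube_root zeta_root) mulr1 ger0_norm ?ler0c.
by move=> /(lt_Re_bound Ls); rewrite ltNge sB.
Qed.

End Escape.

Lemma bifurcation_radius_bounds {R : realFieldType} {eps r : R} :
  0 < eps -> eps <= 1 / 2 -> 1 / 4 + eps - eps ^+ 2 < r ->
  [/\ 1 / 4 < r, eps <= r & 0 < 4 * r ^+ 2 - r - eps].
Proof.
move=> eps_gt0 eps_le r_gt; set A := 1 / 4 + eps - eps ^+ 2 in r_gt.
have A_ge : 1 / 4 <= A by rewrite /A; nra.
have eps_le_A : eps <= A by rewrite /A; nra.
have A_root : 0 <= 4 * A ^+ 2 - A - eps.
  have -> : 4 * A ^+ 2 - A - eps = eps ^+ 2 * ((1 - 2 * eps) * (3 - 2 * eps)).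
    by rewrite /A; field.
  by rewrite mulr_ge0 ?sqr_ge0 ?mulr_ge0 //; lra.
split; [lra | lra | nra].
Qed.

Theorem theorem4p14 (R : realType) (eps : R) :
  0 < eps -> eps <= 1 / 2 ->
  (r_bif ((- eps)%R%:C)%C <= (1 / 4 + eps - eps ^+ 2)%R%:E)%E.
Proof.
move=> eps_gt0 eps_le; have eps_ge0 := ltW eps_gt0.
apply: ge_ereal_sup => _ [r [r_ge0 [L [[[Lne [Lc Linv]] _] Lplanar]]] <-].
rewrite lee_fin leNgt; apply/negP => r_gt.
have [r_gt4 eps_le_r d_gt0] := bifurcation_radius_bounds eps_gt0 eps_le r_gt.
have [B LB] := one_point_compact_bounded Lc Lplanar.
have L_step c z : `|c + eps%:C| <= r%:C -> L (Some z) -> L (Some (z ^+ 2 + c)).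
  by move=> c_near; apply: Gcr_invariant_step Linv _; rewrite rmorphN opprK.
case: Lne => -[z Lz|//].
have r_real : r%:C \is Num.real by apply: ger0_real; rewrite ler0c.
have [near|far] := real_leP (normr_real (z ^+ 2 - eps%:C)) r_real.
- apply: (origin_notin eps_ge0 L_step LB r_gt4 eps_le_r).
  by rewrite -(addrN (z ^+ 2)); apply: L_step Lz; rewrite addrC -opprB normrN.
- have [z' Lz' nz'] := step_to_max_modulus r_ge0 L_step z Lz.
  apply: (no_point_beyond_twice_r eps_ge0 r_ge0 L_step LB d_gt0 z' Lz').
  by rewrite nz' mulr_natl mulr2n rmorphD lerD2r ltW.
Qed.
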